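(* Let $H_1,\dots,H_n$ be finite-dimensional Hilbert spaces and let $\Lambda$ be a trace-preserving quantum channel on operators on $H_1\otimes\cdots\otimes H_n$ implementable by local operations and classical communication (LOCC) which is unital, i.e. $\Lambda(I)=I$. Then for every density operator $\rho$ on $H_1\otimes\cdots\otimes H_n$, $E_W(\Lambda(\rho))\le E_W(\rho)$.
   Context: A density operator on $H_1\otimes\cdots\otimes H_n$ is (fully) separable if it is a convex combination of product states $\sigma_1\otimes\cdots\otimes\sigma_n$. An entanglement witness (EW) is a Hermitian operator $W$ with $\mathrm{Tr}(W\sigma)\ge0$ for every separable $\sigma$; only normalized witnesses, $\mathrm{Tr}(W)=1$, are considered. An optimal entanglement witness $W_\rho$ for $\rho$ minimizes $\mathrm{Tr}(W\rho)$ over all normalized EWs. The witnessed entanglement is $E_W(\rho)=\max\{0,-\mathrm{Tr}(W_\rho\rho)\}$. *)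

From HB Require Import structures.
From mathcomp Require Import all_boot all_order all_algebra.
From mathcomp Require Import complex.
From mathcomp Require Import boolp classical_sets reals.
Set Implicit Arguments. Unset Strict Implicit. Unset Printing Implicit Defensive.
Import Order.TTheory GRing.Theory Num.Theory.
Local Open Scope ring_scope.

(* Operators between finite-dimensional spaces with orthonormal bases
   indexed by the finite types T and U: plain complex-valued kernels. *)
Definition Mat (R : realType) (T U : finType) := T -> U -> R[i].

Section Ops.
Variable R : realType.

Definition mulM (T U V : finType) (A : Mat R T U) (B : Mat R U V) : Mat R T V :=
  fun x z => \sum_(y : U) A x y * B y z.
Definition adjM (T U : finType) (A : Mat R T U) : Mat R U T :=
  fun y x => conjc (A x y).
Definition idM (T : finType) : Mat R T T := fun x y => if x == y then 1 else 0.
Definition trM (T : finType) (A : Mat R T T) : R[i] := \sum_(x : T) A x x.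

Definition hermitian (T : finType) (A : Mat R T T) : Prop :=
  forall x y, A x y = conjc (A y x).
Definition psd (T : finType) (A : Mat R T T) : Prop :=
  hermitian A /\
  forall v : T -> R[i], 0 <= \sum_(x : T) \sum_(y : T) conjc (v x) * A x y * v y.
Definition density (T : finType) (A : Mat R T T) : Prop := psd A /\ trM A = 1.
End Ops.

(* Basis index of H_1 (x) ... (x) H_n with dim H_i = d i. *)
Definition Idx (n : nat) (d : 'I_n -> nat) : finType :=
  {dffun forall i : 'I_n, 'I_(d i)}.
Definition Op (R : realType) (n : nat) (d : 'I_n -> nat) := Mat R (Idx d) (Idx d).

Section Sep.
Variables (R : realType) (n : nat) (d : 'I_n -> nat).

Definition prod_op (s : forall i : 'I_n, Mat R 'I_(d i) 'I_(d i)) : Op R d :=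
  fun x y => \prod_(i < n) s i (x i) (y i).

Definition separable (rho : Op R d) : Prop :=
  exists (k : nat) (p : 'I_k -> R[i])
         (s : 'I_k -> forall i : 'I_n, Mat R 'I_(d i) 'I_(d i)),
    [/\ forall j, 0 <= p j, \sum_(j < k) p j = 1,
        forall j i, density (s j i)
      & forall x y, rho x y = \sum_(j < k) p j * prod_op (s j) x y].

Definition EW (W : Op R d) : Prop :=
  hermitian W /\ forall sigma, separable sigma -> 0 <= trM (mulM W sigma).
Definition normalized_EW (W : Op R d) : Prop := EW W /\ trM W = 1.

(* E_W(rho) = max{0, - min_W Tr(W rho)}; the minimum over normalized
   witnesses (attained, by compactness) is written as an infimum. *)
Definition E_W (rho : Op R d) : R :=
  Num.max 0 (- inf [set complex.Re (trM (mulM W rho)) | W in [set W | normalized_EW W]]).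
End Sep.

Section LOCC.
Variables (R : realType) (n : nat).

(* Kraus operator a acting on party k only (identity on the other parties),
   from dims d to dims e (with e j = d j for j != k). *)
Definition lift_local (d e : 'I_n -> nat) (k : 'I_n)
    (a : Mat R 'I_(e k) 'I_(d k)) : Mat R (Idx e) (Idx d) :=
  fun x y => a (x k) (y k) *
    (if [forall j : 'I_n, (j != k) ==> (nat_of_ord (x j) == nat_of_ord (y j))]
     then 1 else 0).

Definition local_branch (d e : 'I_n -> nat) (k : 'I_n) (m : nat)
    (A : 'I_m -> seq (Mat R 'I_(e k) 'I_(d k))) (o : 'I_m)
    (X : Op R d) : Op R e :=
  fun x y => \sum_(a <- A o)
     mulM (mulM (lift_local a) X) (adjM (lift_local a)) x y.

(* Finite-round LOCC instruments, as lists of their branches (CP maps). *)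
Inductive LOCC_instr : forall d e : 'I_n -> nat, seq (Op R d -> Op R e) -> Prop :=
| LI_local (k : 'I_n) (d e : 'I_n -> nat) (m : nat)
    (A : 'I_m -> seq (Mat R 'I_(e k) 'I_(d k))) :
    (forall j, j != k -> d j = e j) ->
    (forall u v, \sum_(o < m) \sum_(a <- A o) mulM (adjM a) a u v = @idM R _ u v) ->
    LOCC_instr [seq local_branch A o | o <- enum 'I_m]
| LI_comp (d e f : 'I_n -> nat) (Fs : seq (Op R d -> Op R e))
    (Gss : seq (seq (Op R e -> Op R f))) :
    LOCC_instr Fs -> size Gss = size Fs ->
    (forall i, (i < size Fs)%N -> LOCC_instr (nth [::] Gss i)) ->
    LOCC_instr (flatten [seq [seq G \o p.1 | G <- p.2] | p <- zip Fs Gss]).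

Definition LOCC_channel (d : 'I_n -> nat) (L : Op R d -> Op R d) : Prop :=
  exists Fs : seq (Op R d -> Op R d), LOCC_instr Fs /\
    forall X x y, L X x y = \sum_(F <- Fs) F X x y.

Definition trace_preserving (d : 'I_n -> nat) (L : Op R d -> Op R d) : Prop :=
  forall X, trM (L X) = trM X.
Definition unital (d : 'I_n -> nat) (L : Op R d -> Op R d) : Prop :=
  forall x y, L (@idM R (Idx d)) x y = @idM R (Idx d) x y.
End LOCC.

(* An LOCC channel L is linear, commutes with adjoints and maps the cone
   generated by products of PSD operators into itself, since each local
   Kraus operator acts on a single tensor factor; being trace preserving,
   L maps separable states to separable states.  Hence the Hilbert-Schmidt
   dual L* maps entanglement witnesses to entanglement witnesses, and it is
   trace preserving because L is unital.  As Tr (L*(W) rho) = Tr (W L(rho)),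
   the values Tr (W L(rho)) over normalized witnesses W are among the values
   Tr (W rho), so their infimum is not smaller.  This infimum is a genuine
   one (not the junk value of [inf] on sets unbounded below): polarizing
   with product vectors over fourth roots of unity bounds every entry of a
   normalized witness by 2^n. *)

From Pilot Require Import Defs.
From mathcomp Require Import all_boot all_order all_algebra.
From mathcomp Require Import complex.
From mathcomp Require Import boolp classical_sets reals.
From mathcomp Require Import ring.
Set Implicit Arguments. Unset Strict Implicit. Unset Printing Implicit Defensive.
Import Order.TTheory GRing.Theory Num.Theory.
Local Open Scope ring_scope.

Section Kernels.
Variable R : realType.
Local Notation C := R[i].

Lemma mulMA (T U V W : finType) (A : Mat R T U) (B : Mat R U V) (D : Mat R V W) :
  mulM (mulM A B) D = mulM A (mulM B D).
Proof.
apply/funext=> x; apply/funext=> z; rewrite /mulM.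
under eq_bigr do rewrite mulr_suml.
rewrite exchange_big; apply: eq_bigr => y _; rewrite mulr_sumr.
by apply: eq_bigr => w _; rewrite mulrA.
Qed.

Lemma adjM_mulM (T U V : finType) (A : Mat R T U) (B : Mat R U V) :
  adjM (mulM A B) = mulM (adjM B) (adjM A).
Proof.
apply/funext=> x; apply/funext=> z; rewrite /adjM /mulM rmorph_sum.
by apply: eq_bigr => y _; rewrite rmorphM mulrC.
Qed.

Lemma adjMK (T U : finType) (A : Mat R T U) : adjM (adjM A) = A.
Proof. by apply/funext=> x; apply/funext=> z; rewrite /adjM conjcK. Qed.

Lemma trM_mulMC (T U : finType) (A : Mat R T U) (B : Mat R U T) :
  trM (mulM A B) = trM (mulM B A).
Proof.
rewrite /trM /mulM exchange_big; apply: eq_bigr => y _.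
by apply: eq_bigr => x _; rewrite mulrC.
Qed.

Lemma conjc_trM (T : finType) (A : Mat R T T) : conjc (trM A) = trM (adjM A).
Proof. exact: rmorph_sum. Qed.

Lemma hermitianP (T : finType) (A : Mat R T T) : Defs.hermitian A <-> adjM A = A.
Proof.
split=> [hA|adjA x y]; last by rewrite -{1}adjA.
by apply/funext=> x; apply/funext=> y; rewrite /adjM -hA.
Qed.

Lemma ger0_Re (c : C) : 0 <= c -> ((complex.Re c)%:C)%C = c.
Proof. by case: c => a b; rewrite lecE /= => /andP[/eqP -> _]. Qed.

Lemma ger0_conjc (c : C) : 0 <= c -> conjc c = c.
Proof. by move/ger0_Re <-; rewrite conjc_real. Qed.

Lemma mulJc_ge0 (c : C) : 0 <= conjc c * c.
Proof. by rewrite mulrC mulcJ_ge0. Qed.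

Lemma mulJc_eq0 (c : C) : (conjc c * c == 0) = (c == 0).
Proof. by rewrite mulf_eq0 conjc_eq0 orbb. Qed.

Lemma sum_delta_r (T : finType) (F : T -> C) (x : T) :
  \sum_(w : T) F w * (w == x)%:R = F x.
Proof.
rewrite (bigD1 x) //= eqxx mulr1 big1 ?addr0 // => w /negbTE ->; exact: mulr0.
Qed.

Lemma sum_delta_l (T : finType) (F : T -> C) (x : T) :
  \sum_(w : T) (w == x)%:R * F w = F x.
Proof. by rewrite -[RHS](sum_delta_r F x); apply: eq_bigr => w _; rewrite mulrC. Qed.

Definition qform (T : finType) (A : Mat R T T) (v : T -> C) : C :=
  \sum_(x : T) \sum_(y : T) conjc (v x) * A x y * v y.

Definition colM (T : finType) (v : T -> C) : Mat R T unit := fun x _ => v x.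

Lemma qformE (T : finType) (A : Mat R T T) (v : T -> C) :
  qform A v = mulM (mulM (adjM (colM v)) A) (colM v) tt tt.
Proof.
rewrite /qform /mulM /adjM /colM.
under [RHS]eq_bigr do rewrite mulr_suml.
by rewrite exchange_big.
Qed.

Lemma psd_diag_ge0 (T : finType) (A : Mat R T T) (x : T) : psd A -> 0 <= A x x.
Proof.
case=> _ /(_ (fun z => (z == x)%:R)).
under eq_bigr do rewrite sum_delta_r conjc_nat.
by rewrite sum_delta_l.
Qed.

Lemma psd_trM_ge0 (T : finType) (A : Mat R T T) : psd A -> 0 <= trM A.
Proof. by move=> hA; apply: sumr_ge0 => x _; exact: psd_diag_ge0. Qed.

Lemma sum_pair (T : finType) (F : T -> C) (x y : T) : x != y ->
  (forall z, z != x -> z != y -> F z = 0) -> \sum_z F z = F x + F y.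
Proof.
move=> nxy F0; rewrite (bigD1 x) //= (bigD1 y) /=; last by rewrite eq_sym.
by rewrite big1 ?addr0 // => z /andP[zy zx]; apply: F0.
Qed.

(* With a zero diagonal, the test vector [e_x - conj (A x y) e_y] gives
   [qform A v = - 2 |A x y|^2]. *)
Lemma psd_trM_eq0 (T : finType) (A : Mat R T T) : psd A -> trM A = 0 ->
  forall x y, A x y = 0.
Proof.
move=> hA trA0.
have diag0 x : A x x = 0.
  by apply: (psumr_eq0P _ trA0) => // z _; exact: psd_diag_ge0.
move=> x y; have [->|nxy] := eqVneq x y; first exact: diag0.
case: hA => hermA formA; set a := A x y.
pose v z : C := if z == x then 1 else if z == y then - conjc a else 0.
have vx : v x = 1 by rewrite /v eqxx.
have vy : v y = - conjc a by rewrite /v eqxx eq_sym (negbTE nxy).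
have v0 z : z != x -> z != y -> v z = 0 by rewrite /v => /negbTE -> /negbTE ->.
have row z : \sum_w conjc (v z) * A z w * v w =
    conjc (v z) * A z x * v x + conjc (v z) * A z y * v y.
  by apply: sum_pair => // w wx wy; rewrite (v0 w) // mulr0.
move: (formA v); rewrite (sum_pair nxy) => [|z zx zy]; last first.
  by rewrite big1 // => w _; rewrite (v0 z) // conjc0 !mul0r.
rewrite !row vx vy !diag0 (hermA y x) -/a conjc1 rmorphN /= conjcK.
have -> : 1 * 0 * 1 + 1 * a * - conjc a + (- a * conjc a * 1 + - a * 0 * - conjc a) =
   - (2%:R * (conjc a * a)) by ring.
rewrite oppr_ge0 pmulr_rle0 ?ltr0n // => aa_le0.
have : conjc a * a == 0 by rewrite eq_le aa_le0 mulJc_ge0.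
by rewrite mulJc_eq0 => /eqP.
Qed.

Lemma psd_scale (T : finType) (c : C) (A : Mat R T T) : 0 <= c -> psd A ->
  psd (fun x y => c * A x y).
Proof.
move=> c_ge0 [hermA formA]; split=> [x y|v].
  by rewrite rmorphM /= ger0_conjc // -hermA.
have -> : \sum_x \sum_y conjc (v x) * (c * A x y) * v y = c * qform A v.
  rewrite mulr_sumr; apply: eq_bigr => x _; rewrite mulr_sumr.
  by apply: eq_bigr => y _; ring.
exact: mulr_ge0 c_ge0 (formA v).
Qed.

Lemma psd_congr (T U : finType) (B : Mat R U T) (A : Mat R T T) : psd A ->
  psd (mulM (mulM B A) (adjM B)).
Proof.
move=> [/hermitianP hermA formA]; split.
  by apply/hermitianP; rewrite !adjM_mulM adjMK hermA mulMA.
move=> v; have := formA (fun p => mulM (adjM B) (colM v) p tt).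
rewrite -/(qform _ _) -/(qform _ _) !qformE.
have -> : colM (fun p => mulM (adjM B) (colM v) p tt) = mulM (adjM B) (colM v).
  by apply/funext => p; apply/funext => -[].
by rewrite adjM_mulM adjMK !mulMA.
Qed.

Definition outerM (T : finType) (f : T -> C) : Mat R T T :=
  fun u v => f u * conjc (f v).

Lemma psd_outerM (T : finType) (f : T -> C) : psd (outerM f).
Proof.
split=> [u v|v]; first by rewrite /outerM rmorphM /= conjcK mulrC.
change (0 <= qform (outerM f) v).
have -> : qform (outerM f) v =
    (\sum_u conjc (v u) * f u) * conjc (\sum_u conjc (v u) * f u).
  rewrite rmorph_sum mulr_suml; apply: eq_bigr => u _.
  rewrite mulr_sumr; apply: eq_bigr => w _.
  by rewrite /outerM rmorphM /= conjcK; ring.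
exact: mulcJ_ge0.
Qed.

Lemma trM_outerM (T : finType) (f : T -> C) :
  trM (outerM f) = \sum_t conjc (f t) * f t.
Proof. by apply: eq_bigr => t _; rewrite mulrC. Qed.

Lemma trM_mulM_outerM (T : finType) (W : Mat R T T) (f : T -> C) :
  trM (mulM W (outerM f)) = qform W f.
Proof.
rewrite /trM /mulM /qform; apply: eq_bigr => x _.
by apply: eq_bigr => y _; rewrite /outerM; ring.
Qed.

Lemma trM_sum (T : finType) (I : Type) (s : seq I) (f : I -> C) (M : I -> Mat R T T) :
  trM (fun x y => \sum_(j <- s) f j * M j x y) = \sum_(j <- s) f j * trM (M j).
Proof. by rewrite /trM exchange_big; apply: eq_bigr => j _; rewrite mulr_sumr. Qed.

Lemma mulM_sum (T : finType) (I : Type) (s : seq I) (f : I -> C)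
    (W : Mat R T T) (M : I -> Mat R T T) :
  mulM W (fun x y => \sum_(j <- s) f j * M j x y) =
  fun x y => \sum_(j <- s) f j * mulM W (M j) x y.
Proof.
apply/funext=> x; apply/funext=> y; rewrite /mulM.
under eq_bigr do rewrite mulr_sumr.
rewrite exchange_big; apply: eq_bigr => j _; rewrite mulr_sumr.
by apply: eq_bigr => z _; ring.
Qed.

Lemma trM_mulM_scale (T : finType) (W A : Mat R T T) (c : C) :
  trM (mulM W (fun x y => c * A x y)) = c * trM (mulM W A).
Proof.
rewrite /trM /mulM mulr_sumr; apply: eq_bigr => x _.
by rewrite mulr_sumr; apply: eq_bigr => y _; ring.
Qed.

(* A trace-zero PSD kernel vanishes, so the junk choice of a pure state in
   that case is harmless (see [normalizeMK]). *)
Definition normalizeM (T : finType) (t0 : T) (A : Mat R T T) : Mat R T T :=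
  if trM A == 0 then outerM (fun u => (u == t0)%:R)
  else fun u v => (trM A)^-1 * A u v.

Lemma density_normalizeM (T : finType) (t0 : T) (A : Mat R T T) :
  psd A -> density (normalizeM t0 A).
Proof.
rewrite /normalizeM => psdA; case: ifPn => [_ | trA_neq0].
  split; first exact: psd_outerM.
  rewrite trM_outerM (bigD1 t0) //= eqxx mulr1 conjc1 big1 ?addr0 //.
  by move=> u /negbTE ->; rewrite mulr0.
split; last by rewrite /trM -mulr_sumr mulVf.
by apply: psd_scale => //; rewrite invr_ge0; exact: psd_trM_ge0.
Qed.

Lemma normalizeMK (T : finType) (t0 : T) (A : Mat R T T) : psd A ->
  forall u v, A u v = trM A * normalizeM t0 A u v.
Proof.
move=> psdA u v; rewrite /normalizeM; case: ifPn => [/eqP trA0 | trA_neq0].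
  by rewrite trA0 mul0r (psd_trM_eq0 psdA trA0).
by rewrite mulrA mulfV ?mul1r.
Qed.

End Kernels.

Section Tensor.
Variable R : realType.
Local Notation C := R[i].

Lemma sum_dffun_prod (I : finType) (T_ : I -> finType) (F : forall i, T_ i -> C) :
  \sum_(x : {dffun forall i : I, T_ i}) \prod_(i : I) F i (x i) =
  \prod_(i : I) \sum_(t : T_ i) F i t.
Proof.
rewrite (reindex (@dffun_of_fprod I T_)); last exact/onW_bij/dffun_of_fprod_bij.
under eq_bigr do under eq_bigr do rewrite ffunE.
pose P_ i := [ffun t : T_ i => F i t].
transitivity (\sum_(t : fprod T_) \prod_(i in I) P_ i (t i)).
  by apply: eq_bigr => t _; apply: eq_bigr => i _; rewrite ffunE.
rewrite big_fprod.
transitivity (\prod_(i : I) \sum_(t : T_ i) P_ i t); last first.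
  by apply: eq_bigr => i _; apply: eq_bigr => t _; rewrite ffunE.
under [RHS]eq_bigr do rewrite (big_tag (fun i => P_ i)).
by rewrite (bigA_distr_big_dep (fun i => tagged_with T_ i)).
Qed.

Lemma prod_nat_bool (I : finType) (P : pred I) (b : I -> bool) :
  \prod_(j | P j) ((b j)%:R : C) = if [forall j, P j ==> b j] then 1 else 0.
Proof.
case: ifP => [/fintype.forallP allb | /negbT].
  by rewrite big1 // => j Pj; have := allb j; rewrite Pj /= => ->.
rewrite negb_forall => /fintype.existsP [j]; rewrite negb_imply => /andP[Pj /negbTE bj].
by rewrite (bigD1 j) //= bj mul0r.
Qed.

(* [d j = e j] holds only propositionally for the parties [j] untouched by a
   local operation, so kernels are transported along the values of indices
   (with junk value [0] out of range). *)
Definition resizeM m1 m2 m1' m2' (A : Mat R 'I_m1 'I_m2) : Mat R 'I_m1' 'I_m2' :=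
  fun u v => match (insub (val u) : option 'I_m1), (insub (val v) : option 'I_m2) with
             | Some u', Some v' => A u' v'
             | _, _ => 0 end.

Lemma resizeM_id m1 m2 (A : Mat R 'I_m1 'I_m2) : resizeM A = A.
Proof. by apply/funext => u; apply/funext => v; rewrite /resizeM !valK. Qed.

Lemma psd_resizeM m m' (A : Mat R 'I_m 'I_m) : m = m' -> psd A ->
  psd (resizeM A : Mat R 'I_m' 'I_m').
Proof. by move=> eq_m; subst m'; rewrite resizeM_id. Qed.

Lemma resizeME m m' (A : Mat R 'I_m 'I_m) (u v : 'I_m') : m = m' ->
  \sum_(w : 'I_m) \sum_(t : 'I_m) (val u == val t)%:R * A t w * conjc ((val v == val w)%:R)
  = resizeM A u v.
Proof.
move=> eq_m; subst m'; rewrite resizeM_id -[RHS]sum_delta_r.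
apply: eq_bigr => w _; rewrite conjc_nat -mulr_suml val_eqE eq_sym; congr (_ * _).
by rewrite -[RHS](sum_delta_l (A^~ w) u); apply: eq_bigr => t _; rewrite val_eqE eq_sym.
Qed.

Section Product.
Variables (n : nat) (d : 'I_n -> nat).

Lemma trM_prod_op (s : forall i, Mat R 'I_(d i) 'I_(d i)) :
  trM (prod_op s) = \prod_i trM (s i).
Proof. exact: (sum_dffun_prod (fun i t => s i t t)). Qed.

Lemma prod_op_outerM (f : forall i, 'I_(d i) -> C) :
  prod_op (fun i => outerM (f i)) = outerM (fun x : Idx d => \prod_i f i (x i)).
Proof.
apply/funext=> x; apply/funext=> y.
by rewrite /prod_op /outerM big_split rmorph_prod.
Qed.

Lemma prod_delta (x y : Idx d) : \prod_i ((x i == y i)%:R : C) = (x == y)%:R.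
Proof.
rewrite prod_nat_bool -mulrb; congr (1 *+ nat_of_bool _).
apply/idP/eqP => [/fintype.forallP eq_xy | ->].
  by apply/ffunP => i; apply/eqP; exact: eq_xy.
by apply/fintype.forallP => i; rewrite eqxx.
Qed.

Section LocalKraus.
Variables (e : 'I_n -> nat) (k : 'I_n).
Hypothesis d_eq_e : forall j, j != k -> d j = e j.
Variables (a : Mat R 'I_(e k) 'I_(d k)) (s : forall i, Mat R 'I_(d i) 'I_(d i)).

Definition local_update : forall j, Mat R 'I_(e j) 'I_(e j) := fun j =>
  if j == k then resizeM (mulM (mulM a (@s k)) (adjM a)) else resizeM (@s j).

Definition lift_factor j (u : 'I_(e j)) (t : 'I_(d j)) : C :=
  if j == k then resizeM a u t else (val u == val t)%:R.

Lemma lift_localE (x : Idx e) (y : Idx d) :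
  lift_local a x y = \prod_j lift_factor (x j) (y j).
Proof.
rewrite /lift_local (bigD1 k) //= /lift_factor eqxx resizeM_id; congr (_ * _).
by rewrite -prod_nat_bool; apply: eq_bigr => j /negbTE ->.
Qed.

Lemma lift_local_prod_op :
  mulM (mulM (lift_local a) (prod_op s)) (adjM (lift_local a)) = prod_op local_update.
Proof.
apply/funext => x; apply/funext => y; rewrite /mulM /adjM /prod_op.
transitivity (\sum_(q : Idx d) \sum_(p : Idx d) \prod_j
   (lift_factor (x j) (p j) * @s j (p j) (q j) * conjc (lift_factor (y j) (q j)))).
  apply: eq_bigr => q _; rewrite mulr_suml; apply: eq_bigr => p _.
  by rewrite !big_split /= !lift_localE rmorph_prod.
under eq_bigr do rewrite (sum_dffun_prod (fun j t =>
  lift_factor (x j) t * @s j t _ * conjc (lift_factor (y j) _))).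
rewrite (sum_dffun_prod (fun j u =>
  \sum_t lift_factor (x j) t * @s j t u * conjc (lift_factor (y j) u))).
apply: eq_bigr => j _; rewrite /local_update /lift_factor.
have [-> | njk] := eqVneq j k.
  by rewrite !resizeM_id; apply: eq_bigr => u _; rewrite mulr_suml.
exact/resizeME/d_eq_e.
Qed.

End LocalKraus.
End Product.
End Tensor.

Section SeparableCone.
Variables (R : realType) (n : nat).
Local Notation C := R[i].

Definition cone_term (d : 'I_n -> nat) (t : C * (forall i, Mat R 'I_(d i) 'I_(d i))) :=
  0 <= t.1 /\ forall i, psd (t.2 i).

Definition sep_cone (d : 'I_n -> nat) (X : Op R d) :=
  exists l : seq {t | @cone_term d t},
    X = fun x y => \sum_(t <- l) (sval t).1 * prod_op (sval t).2 x y.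

Lemma sep_cone0 (d : 'I_n -> nat) : @sep_cone d (fun _ _ => 0).
Proof. by exists [::]; apply/funext => x; apply/funext => y; rewrite big_nil. Qed.

Lemma sep_coneD (d : 'I_n -> nat) (X Y : Op R d) : sep_cone X -> sep_cone Y ->
  sep_cone (fun x y => X x y + Y x y).
Proof.
move=> [l1 ->] [l2 ->]; exists (l1 ++ l2).
by apply/funext => x; apply/funext => y; rewrite big_cat.
Qed.

Section FixedDims.
Variable d : 'I_n -> nat.

Lemma separable_sep_cone (X : Op R d) : separable X -> sep_cone X.
Proof.
case=> k [p [s [p_ge0 _ dens_s defX]]].
have term j : @cone_term d (p j, s j) by split => //= i; case: (dens_s j i).
exists [seq exist _ _ (term j) | j <- index_enum 'I_k].
by apply/funext => x; apply/funext => y; rewrite defX big_map.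
Qed.

Lemma separable_trM (X : Op R d) : separable X -> trM X = 1.
Proof.
case=> k [p [s [_ p1 dens_s defX]]].
have -> : X = fun x y => \sum_(j < k) p j * prod_op (s j) x y.
  by apply/funext => x; apply/funext => y; exact: defX.
rewrite -[RHS]p1 trM_sum; apply: eq_bigr => j _.
by rewrite trM_prod_op big1 ?mulr1 // => i _; case: (dens_s j i).
Qed.

Lemma separable_prod_op (s : forall i, Mat R 'I_(d i) 'I_(d i)) :
  (forall i, density (s i)) -> separable (prod_op s).
Proof.
move=> dens_s; exists 1%N, (fun _ => 1), (fun _ => s).
by split=> // [|x y]; rewrite big_ord1 ?mul1r.
Qed.

Lemma prod_op_normalize (x0 : Idx d) (s : forall i, Mat R 'I_(d i) 'I_(d i)) :
  (forall i, psd (s i)) -> forall x y,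
  prod_op s x y = (\prod_i trM (s i)) * prod_op (fun i => normalizeM (x0 i) (s i)) x y.
Proof.
by move=> psd_s x y; rewrite /prod_op -big_split; apply: eq_bigr => i _; exact: normalizeMK.
Qed.

Lemma sep_cone_separable (X : Op R d) : sep_cone X -> trM X = 1 -> separable X.
Proof.
move=> [l defX] trX1.
have [x0 _ | Idx0] := pickP (@predT (Idx d)); last first.
  by move: trX1; rewrite /trM big_pred0 // => /eqP; rewrite eq_sym oner_eq0.
pose w (t : {t | @cone_term d t}) := (sval t).1 * \prod_i trM ((sval t).2 i).
pose dens (t : {t | @cone_term d t}) i := normalizeM (x0 i) ((sval t).2 i).
have w_ge0 t : 0 <= w t.
  case: t => [[c s] [c_ge0 psd_s]]; apply: mulr_ge0 => //.
  by apply: prodr_ge0 => i _; exact: psd_trM_ge0.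
have termE t x y : (sval t).1 * prod_op (sval t).2 x y = w t * prod_op (dens t) x y.
  by case: t => [[c s] [c_ge0 psd_s]]; rewrite (prod_op_normalize x0 psd_s) mulrA.
pose t0 : {t | @cone_term d t} :=
  exist _ (0, fun i => outerM (fun _ => 0)) (conj (lexx 0) (fun i => psd_outerM _)).
exists (size l), (fun j => w (nth t0 l j)), (fun j => dens (nth t0 l j)); split.
- by move=> j; exact: w_ge0.
- rewrite -(big_mkord xpredT (fun j => w (nth t0 l j))) -(big_nth t0 xpredT w).
  by rewrite -trX1 defX trM_sum; apply: eq_bigr => t _; rewrite trM_prod_op.
- by move=> j i; apply: density_normalizeM; case: (proj2_sig (nth t0 l j)).
- move=> x y; rewrite defX.
  rewrite -(big_mkord xpredT (fun j => w (nth t0 l j) * prod_op (dens (nth t0 l j)) x y)).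
  rewrite -(big_nth t0 xpredT (fun t => w t * prod_op (dens t) x y)).
  by apply: eq_bigr => t _; exact: termE.
Qed.

Lemma EW_prod_op_ge0 (W : Op R d) (s : forall i, Mat R 'I_(d i) 'I_(d i)) :
  EW W -> (forall i, psd (s i)) -> 0 <= trM (mulM W (prod_op s)).
Proof.
move=> [_ W_sep] psd_s.
have [x0 _ | Idx0] := pickP (@predT (Idx d)); last by rewrite /trM big_pred0.
have -> : prod_op s = fun x y =>
    (\prod_i trM (s i)) * prod_op (fun i => normalizeM (x0 i) (s i)) x y.
  by apply/funext => x; apply/funext => y; exact: prod_op_normalize.
rewrite trM_mulM_scale; apply: mulr_ge0.
  by apply: prodr_ge0 => i _; exact: psd_trM_ge0.
by apply/W_sep/separable_prod_op => i; exact: density_normalizeM.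
Qed.

End FixedDims.
End SeparableCone.

Section LOCCMaps.
Variables (R : realType) (n : nat).
Local Notation C := R[i].

Definition lin_map (d e : 'I_n -> nat) (F : Op R d -> Op R e) :=
  forall (c : C) (X Y : Op R d),
    F (fun x y => c * X x y + Y x y) = fun x y => c * F X x y + F Y x y.
Definition adj_map (d e : 'I_n -> nat) (F : Op R d -> Op R e) :=
  forall X, F (adjM X) = adjM (F X).
Definition sep_map (d e : 'I_n -> nat) (F : Op R d -> Op R e) :=
  forall X, sep_cone X -> sep_cone (F X).
Definition sep_lin_map (d e : 'I_n -> nat) (F : Op R d -> Op R e) :=
  [/\ lin_map F, adj_map F & sep_map F].

Lemma sep_lin_map_comp (d e f : 'I_n -> nat) (F : Op R d -> Op R e) (G : Op R e -> Op R f) :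
  sep_lin_map F -> sep_lin_map G -> sep_lin_map (G \o F).
Proof.
move=> [linF adjF sepF] [linG adjG sepG]; split.
- by move=> c X Y /=; rewrite linF linG.
- by move=> X /=; rewrite adjF adjG.
- by move=> X sepX /=; apply/sepG/sepF.
Qed.

Lemma lin_map0 (d e : 'I_n -> nat) (F : Op R d -> Op R e) :
  lin_map F -> F (fun _ _ => 0) = fun _ _ => 0.
Proof.
move=> linF; apply/funext => x; apply/funext => y.
have := congr1 (fun M => M x y) (linF 1 (fun _ _ => 0) (fun _ _ => 0)).
have -> : (fun x y : Idx d => 1 * 0 + 0) = (fun _ _ => 0 : C).
  by apply/funext => u; apply/funext => v; rewrite mulr0 addr0.
by rewrite /= mul1r -{1}[F _ x y]addr0 => /addrI <-.
Qed.

Lemma lin_map_sum (d e : 'I_n -> nat) (F : Op R d -> Op R e) (linF : lin_map F)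
    (I : Type) (s : seq I) (f : I -> C) (M : I -> Op R d) :
  F (fun x y => \sum_(j <- s) f j * M j x y) = fun x y => \sum_(j <- s) f j * F (M j) x y.
Proof.
elim: s => [|j s IH].
  under [in LHS]eq_fun do under eq_fun do rewrite big_nil.
  by rewrite lin_map0 //; apply/funext => x; apply/funext => y; rewrite big_nil.
under [in LHS]eq_fun do under eq_fun do rewrite big_cons.
by rewrite linF IH; apply/funext => x; apply/funext => y; rewrite big_cons.
Qed.

Lemma lin_map_congr (d e : 'I_n -> nat) (B : Mat R (Idx e) (Idx d)) :
  lin_map (fun X : Op R d => mulM (mulM B X) (adjM B)).
Proof.
move=> c X Y; apply/funext => x; apply/funext => y; rewrite /mulM mulr_sumr -big_split.
apply: eq_bigr => q _; rewrite !mulr_suml mulr_sumr -big_split.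
by apply: eq_bigr => p _; rewrite /=; ring.
Qed.

Section LocalBranch.
Variables (k : 'I_n) (d e : 'I_n -> nat) (m : nat).
Variables (A : 'I_m -> seq (Mat R 'I_(e k) 'I_(d k))) (o : 'I_m).
Hypothesis d_eq_e : forall j, j != k -> d j = e j.

Lemma sep_lin_map_local_branch : sep_lin_map (local_branch A o).
Proof.
rewrite /local_branch; split.
- move=> c X Y; apply/funext => x; apply/funext => y.
  rewrite mulr_sumr -big_split; apply: eq_bigr => a _.
  by rewrite (lin_map_congr (lift_local a)).
- move=> X; apply/funext => x; apply/funext => y.
  rewrite [RHS]/adjM rmorph_sum; apply: eq_bigr => a _.
  by rewrite /= -[RHS]/(adjM _ x y) !adjM_mulM adjMK mulMA.
move=> X [l ->].
have term (a : Mat R 'I_(e k) 'I_(d k)) (t : {t | @cone_term R n d t}) :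
    @cone_term R n e ((sval t).1, local_update a (sval t).2).
  case: t => [[c s] [c_ge0 psd_s]]; split => //= j; rewrite /local_update.
  have [-> | njk] := eqVneq j k; first by rewrite resizeM_id; exact: psd_congr.
  exact/psd_resizeM/psd_s/d_eq_e.
exists (flatten [seq [seq exist _ _ (term a t) | t <- l] | a <- A o]).
apply/funext => x; apply/funext => y; rewrite big_flatten /= big_map.
apply: eq_bigr => a _; rewrite big_map (lin_map_sum (lin_map_congr (lift_local a))).
by apply: eq_bigr => t _; rewrite lift_local_prod_op.
Qed.

End LocalBranch.

Lemma sep_lin_map_LOCC_instr (d e : 'I_n -> nat) (Fs : seq (Op R d -> Op R e)) :
  LOCC_instr Fs -> forall F, List.In F Fs -> sep_lin_map F.
Proof.
elim=> {d e Fs} [k d e m A d_eq_e _ | d e f Fs Gss _ IHFs _ _ IHGss] F.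
  by move=> /List.in_map_iff [o [<- _]]; exact: sep_lin_map_local_branch.
elim: Fs Gss IHFs IHGss => [|F1 Fs IH] [|Gs Gss] //= IHFs IHGss.
case/(@List.in_app_or _ _ _ F) => [/List.in_map_iff [G [<- inG]] | inF].
  by apply: sep_lin_map_comp; [apply: IHFs; left | exact: (IHGss 0%N)].
apply: IH inF => [F' inF' | i lt_i G inG]; first by apply: IHFs; right.
exact: (IHGss i.+1).
Qed.

Lemma sep_lin_map0 (d e : 'I_n -> nat) : sep_lin_map (fun (_ : Op R d) (_ _ : Idx e) => 0).
Proof.
split=> [c X Y | X | X _]; last exact: sep_cone0.
  by apply/funext => x; apply/funext => y; rewrite mulr0 addr0.
by apply/funext => x; apply/funext => y; rewrite /adjM conjc0.
Qed.

Lemma sep_lin_mapD (d e : 'I_n -> nat) (F G : Op R d -> Op R e) :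
  sep_lin_map F -> sep_lin_map G -> sep_lin_map (fun X x y => F X x y + G X x y).
Proof.
move=> [linF adjF sepF] [linG adjG sepG]; split.
- move=> c X Y; rewrite linF linG.
  by apply/funext => x; apply/funext => y; ring.
- move=> X; rewrite adjF adjG.
  by apply/funext => x; apply/funext => y; rewrite /adjM rmorphD.
- by move=> X sepX; apply: sep_coneD; [exact: sepF | exact: sepG].
Qed.

Lemma sep_lin_map_sum (d e : 'I_n -> nat) (Fs : seq (Op R d -> Op R e)) :
  (forall F, List.In F Fs -> sep_lin_map F) ->
  sep_lin_map (fun X x y => \sum_(F <- Fs) F X x y).
Proof.
elim: Fs => [_ | F Fs IH allF].
  under eq_fun do under eq_fun do under eq_fun do rewrite big_nil.
  exact: sep_lin_map0.
under eq_fun do under eq_fun do under eq_fun do rewrite big_cons.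
by apply: sep_lin_mapD; [apply: allF; left | apply: IH => G inG; apply: allF; right].
Qed.

Lemma sep_lin_map_LOCC_channel (d : 'I_n -> nat) (L : Op R d -> Op R d) :
  LOCC_channel L -> sep_lin_map L.
Proof.
move=> [Fs [instrFs defL]].
have -> : L = fun X x y => \sum_(F <- Fs) F X x y.
  by apply/funext => X; apply/funext => x; apply/funext => y; exact: defL.
exact/sep_lin_map_sum/sep_lin_map_LOCC_instr.
Qed.

End LOCCMaps.

Section DualMap.
Variables (R : realType) (n : nat) (d : 'I_n -> nat) (L : Op R d -> Op R d).
Hypothesis sepL : sep_lin_map L.

Definition unitM (T : finType) (y x : T) : Mat R T T :=
  fun a b => ((a == y) && (b == x))%:R.

Lemma unitM_expansion (T : finType) (X : Mat R T T) :
  X = fun a b => \sum_(p : T * T) X p.1 p.2 * unitM p.1 p.2 a b.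
Proof.
apply/funext => a; apply/funext => b.
rewrite -(pair_big xpredT xpredT (fun y x => X y x * unitM y x a b)) /= /unitM.
transitivity (\sum_(y : T) (y == a)%:R * X y b); first by rewrite sum_delta_l.
apply: eq_bigr => y _.
transitivity (\sum_(x : T) (y == a)%:R * X y x * (x == b)%:R); first by rewrite sum_delta_r.
by apply: eq_bigr => x _; rewrite -mulnb natrM [a == y]eq_sym [b == x]eq_sym; ring.
Qed.

(* The Hilbert-Schmidt adjoint of [L]. *)
Definition dualM (W : Op R d) : Op R d := fun x y => trM (mulM W (L (unitM y x))).

Lemma trM_mulM_dualM (W X : Op R d) : trM (mulM (dualM W) X) = trM (mulM W (L X)).
Proof.
case: sepL => linL _ _.
rewrite {2}(unitM_expansion X) (lin_map_sum linL) mulM_sum trM_sum.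
rewrite -(pair_big xpredT xpredT (fun y x => X y x * trM (mulM W (L (unitM y x))))) /=.
rewrite {1}/trM /mulM /dualM.
by rewrite exchange_big; apply: eq_bigr => y _; apply: eq_bigr => x _; rewrite mulrC.
Qed.

Lemma hermitian_dualM (W : Op R d) : Defs.hermitian W -> Defs.hermitian (dualM W).
Proof.
case: sepL => _ adjL _ /hermitianP hermW x y.
rewrite /dualM conjc_trM adjM_mulM -adjL hermW trM_mulMC.
congr (trM (mulM (L _) W)).
by apply/funext => a; apply/funext => b; rewrite /adjM /unitM conjc_nat andbC.
Qed.

Lemma trM_dualM (W : Op R d) : unital L -> trM (dualM W) = trM W.
Proof.
case: sepL => linL _ _ unitalL.
have idE : @idM R (Idx d) = fun a b => \sum_(x <- index_enum (Idx d)) 1 * unitM x x a b.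
  apply/funext => a; apply/funext => b; rewrite /idM -mulrb /unitM.
  under eq_bigr do rewrite mul1r -mulnb natrM [a == _]eq_sym.
  by rewrite sum_delta_l eq_sym.
have LidE : L (@idM R (Idx d)) = @idM R (Idx d).
  by apply/funext => a; apply/funext => b; exact: unitalL.
transitivity (trM (mulM W (L (@idM R (Idx d))))).
  by rewrite idE (lin_map_sum linL) mulM_sum trM_sum; apply: eq_bigr => x _; rewrite mul1r.
rewrite LidE /trM /mulM; apply: eq_bigr => x _.
by under eq_bigr do rewrite /idM -mulrb; rewrite sum_delta_r.
Qed.

Lemma EW_dualM (W : Op R d) : trace_preserving L -> EW W -> EW (dualM W).
Proof.
case: sepL => _ _ sep_mapL tpL [hermW W_sep]; split; first exact: hermitian_dualM.
move=> sigma sep_sigma; rewrite trM_mulM_dualM; apply: W_sep.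
apply: sep_cone_separable; first exact/sep_mapL/separable_sep_cone.
by rewrite tpL; exact: separable_trM.
Qed.

Lemma normalized_EW_dualM (W : Op R d) : trace_preserving L -> unital L ->
  normalized_EW W -> normalized_EW (dualM W).
Proof. by move=> tpL unitalL [EW_W trW]; split; [exact: EW_dualM | rewrite trM_dualM]. Qed.

End DualMap.

Section WitnessBound.
Variable R : realType.
Local Notation C := R[i].

Definition zeta (k : 'I_4) : C := nth 0 [:: 1; 'i%C; -1; - 'i%C] k.

Lemma conjc_zeta (k : 'I_4) : conjc (zeta k) = nth 0 [:: 1; - 'i%C; -1; 'i%C] k.
Proof.
by case: k => [[|[|[|[|//]]]] ?]; apply/eqP; rewrite eq_complex /= ?oppr0 ?opprK ?eqxx.
Qed.

Lemma normr_zeta (k : 'I_4) : `|zeta k| = 1.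
Proof.
have normi : `|'i%C : C| = 1 by rewrite complexiE normCi.
by case: k => [[|[|[|[|//]]]] ?]; rewrite /zeta /= ?normrN ?normr1.
Qed.

Lemma sum_zeta_polarize (al be ga de : C) :
  \sum_(k < 4) conjc (zeta k) * (conjc (al + zeta k * be) * (ga + zeta k * de)) =
  4%:R * (conjc al * de).
Proof.
under eq_bigr do rewrite !(rmorphD, rmorphM) /= conjc_zeta.
rewrite !big_ord_recl big_ord0 /zeta /=.
transitivity (2%:R * conjc al * de * (1 - 'i%C ^+ 2) +
              2%:R * conjc be * ga * (1 + 'i%C ^+ 2)).
  ring.
rewrite sqr_i; ring.
Qed.

Lemma sum_zeta_norm (al be ga de : C) :
  \sum_(k < 4) conjc (al + zeta k * be) * (ga + zeta k * de) =
  4%:R * (conjc al * ga + conjc be * de).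
Proof.
under eq_bigr do rewrite !(rmorphD, rmorphM) /= conjc_zeta.
rewrite !big_ord_recl big_ord0 /zeta /=.
transitivity (4%:R * conjc al * ga + 2%:R * conjc be * de * (1 - 'i%C ^+ 2)).
  ring.
rewrite sqr_i; ring.
Qed.

Variables (n : nat) (d : 'I_n -> nat).

Lemma EW_qform_prod_ge0 (W : Op R d) (f : forall i, 'I_(d i) -> C) :
  EW W -> 0 <= qform W (fun x => \prod_i f i (x i)).
Proof.
move=> EW_W; rewrite -trM_mulM_outerM -prod_op_outerM.
by apply: EW_prod_op_ge0 => // i; exact: psd_outerM.
Qed.

Lemma EW_diag_ge0 (W : Op R d) (x : Idx d) : EW W -> 0 <= W x x.
Proof.
move=> /(EW_qform_prod_ge0 (fun i t => (t == x i)%:R)).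
have -> : (fun a : Idx d => \prod_i ((a i == x i)%:R : C)) = fun a => (a == x)%:R.
  by apply/funext => a; exact: prod_delta.
by rewrite /qform; under eq_bigr do rewrite sum_delta_r conjc_nat; rewrite sum_delta_l.
Qed.

Definition polar_factor (x y : Idx d) i (k : 'I_4) (t : 'I_(d i)) : C :=
  (t == x i)%:R + zeta k * (t == y i)%:R.

Definition polar_form (W : Op R d) (x y : Idx d) (om : {ffun 'I_n -> 'I_4}) : C :=
  qform W (fun a => \prod_i polar_factor x y (om i) (a i)).

Lemma sum_polar_form (W : Op R d) (x y : Idx d) (g : 'I_n -> 'I_4 -> C) :
  \sum_(om : {ffun 'I_n -> 'I_4}) (\prod_i g i (om i)) * polar_form W x y om =
  \sum_a \sum_b W a b * \prod_i \sum_(k < 4)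
     g i k * (conjc (polar_factor x y k (a i)) * polar_factor x y k (b i)).
Proof.
rewrite /polar_form /qform.
transitivity (\sum_(om : {ffun 'I_n -> 'I_4}) \sum_a \sum_b W a b * \prod_i
   (g i (om i) * (conjc (polar_factor x y (om i) (a i)) * polar_factor x y (om i) (b i)))).
  apply: eq_bigr => om _; rewrite mulr_sumr; apply: eq_bigr => a _.
  rewrite mulr_sumr; apply: eq_bigr => b _.
  by rewrite big_split big_split /= rmorph_prod; ring.
rewrite exchange_big; apply: eq_bigr => a _.
rewrite exchange_big; apply: eq_bigr => b _.
by rewrite -mulr_sumr bigA_distr_bigA.
Qed.

Lemma sum_polar_form_zeta (W : Op R d) (x y : Idx d) :
  \sum_(om : {ffun 'I_n -> 'I_4}) (\prod_i conjc (zeta (om i))) * polar_form W x y om =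
  (4 ^ n)%:R * W x y.
Proof.
rewrite (sum_polar_form W x y (fun i k => conjc (zeta k))) /polar_factor.
under eq_bigr do under eq_bigr do under eq_bigr do rewrite sum_zeta_polarize conjc_nat.
under eq_bigr do under eq_bigr do
  rewrite big_split /= prodr_const card_ord big_split /= !prod_delta.
rewrite natrX -(sum_delta_l (fun a => 4%:R ^+ n * W a y) x); apply: eq_bigr => a _.
rewrite -(sum_delta_r (W a) y) !mulr_sumr; apply: eq_bigr => b _; ring.
Qed.

Definition polar_weight (x y a b : Idx d) : C :=
  \prod_i (4%:R * ((a i == x i)%:R * (b i == x i)%:R + (a i == y i)%:R * (b i == y i)%:R)).

Lemma sum_polar_form_weight (W : Op R d) (x y : Idx d) :
  \sum_(om : {ffun 'I_n -> 'I_4}) polar_form W x y om =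
  \sum_a \sum_b W a b * polar_weight x y a b.
Proof.
transitivity (\sum_(om : {ffun 'I_n -> 'I_4}) (\prod_(i < n) 1) * polar_form W x y om).
  by apply: eq_bigr => om _; rewrite prodr_const expr1n mul1r.
rewrite (sum_polar_form W x y (fun _ _ => 1)); apply: eq_bigr => a _; apply: eq_bigr => b _.
congr (_ * _); apply: eq_bigr => i _.
by under eq_bigr do rewrite mul1r; rewrite sum_zeta_norm !conjc_nat.
Qed.

Lemma polar_weight_offdiag (x y a b : Idx d) : a != b -> polar_weight x y a b = 0.
Proof.
move=> neq_ab; have [i neq_abi] : exists i, a i != b i.
  apply/existsP; apply: contraR neq_ab; rewrite negb_exists => /fintype.forallP eq_ab.
  by apply/eqP/ffunP => i; apply/eqP; have := eq_ab i; rewrite negbK.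
rewrite /polar_weight (bigD1 i) //= -!natrM !mulnb.
have [-> ->] : ((a i == x i) && (b i == x i)) = false /\
               ((a i == y i) && (b i == y i)) = false.
  by split; apply/negbTE; apply: contra neq_abi => /andP[/eqP -> /eqP ->].
by rewrite addr0 mulr0 mul0r.
Qed.

Lemma polar_weight_diag (x y a : Idx d) : 0 <= polar_weight x y a a <= (8 ^ n)%:R.
Proof.
have -> : (8 ^ n)%:R = \prod_(i < n) (8%:R : C) by rewrite prodr_const card_ord natrX.
rewrite /polar_weight; under eq_bigr do rewrite -!natrM -natrD -natrM.
apply/andP; split; first by apply: prodr_ge0 => i _; rewrite ler0n.
apply: ler_prod => i _; rewrite ler0n ler_nat /=.
by case: (a i == x i); case: (a i == y i).
Qed.

Lemma sum_polar_form_le (W : Op R d) (x y : Idx d) : normalized_EW W ->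
  \sum_(om : {ffun 'I_n -> 'I_4}) polar_form W x y om <= (8 ^ n)%:R.
Proof.
move=> [EW_W trW1]; rewrite sum_polar_form_weight.
have -> : \sum_a \sum_b W a b * polar_weight x y a b = \sum_a W a a * polar_weight x y a a.
  apply: eq_bigr => a _; rewrite (bigD1 a) //= big1 ?addr0 // => b neq_ba.
  by rewrite polar_weight_offdiag ?mulr0 // eq_sym.
apply: (@le_trans _ _ (\sum_a W a a * (8 ^ n)%:R)).
  apply: ler_sum => a _; apply: ler_wpM2l; first exact: EW_diag_ge0.
  by case/andP: (polar_weight_diag x y a).
by rewrite -mulr_suml -/(trM W) trW1 mul1r.
Qed.

(* Polarization over fourth roots of unity in each tensor factor:
   [4^n W x y] is a combination with unimodular coefficients of the
   nonnegative numbers [polar_form W x y om], whose sum is at most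
   [8^n Tr W]. *)
Lemma normalized_EW_entry_bound (W : Op R d) (x y : Idx d) :
  normalized_EW W -> `|W x y| <= (2 ^ n)%:R.
Proof.
move=> nW.
have : `|(4 ^ n)%:R * W x y| <= (8 ^ n)%:R.
  rewrite -sum_polar_form_zeta; apply: le_trans (ler_norm_sum _ _ _) _.
  apply: le_trans (sum_polar_form_le x y nW); apply: ler_sum => om _.
  have := EW_qform_prod_ge0 (fun i => polar_factor x y (om i)) nW.1.
  rewrite /polar_form normrM normr_prod => /ger0_norm ->.
  rewrite (eq_bigr (fun _ => 1)) ?prodr_const ?expr1n ?mul1r // => i _.
  by rewrite normcJ normr_zeta.
rewrite normrM ger0_norm ?ler0n // (_ : 8 ^ n = 4 ^ n * 2 ^ n)%N; last by rewrite -expnMn.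
by rewrite natrM ler_pM2l ?ltr0n ?expn_gt0.
Qed.

End WitnessBound.

Section Witnesses.
Variables (R : realType) (n : nat) (d : 'I_n -> nat).
Local Notation C := R[i].

Lemma normalized_EW_trM_lbound (rho : Op R d) : exists B : R,
  forall W, normalized_EW W -> - B <= complex.Re (trM (mulM W rho)).
Proof.
pose B : C := \sum_x \sum_y (2 ^ n)%:R * `|rho y x|.
have B_ge0 : 0 <= B.
  by apply: sumr_ge0 => x _; apply: sumr_ge0 => y _; rewrite mulr_ge0 ?ler0n.
exists (complex.Re B) => W nW.
have : `|trM (mulM W rho)| <= B.
  apply: le_trans (ler_norm_sum _ _ _) _; apply: ler_sum => x _.
  apply: le_trans (ler_norm_sum _ _ _) _; apply: ler_sum => y _.
  by rewrite normrM ler_wpM2r // normalized_EW_entry_bound.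
move/(le_trans (normc_ge_Re _)); rewrite -(ger0_Re B_ge0) lecR ler_norml.
by case/andP.
Qed.

Definition maxmixed : Op R d := fun x y => #|Idx d|%:R^-1 * @idM R (Idx d) x y.

Lemma normalized_EW_maxmixed : (0 < #|Idx d|)%N -> normalized_EW maxmixed.
Proof.
rewrite -(ltr0n C) => card_gt0.
have c_ge0 : 0 <= #|Idx d|%:R^-1 :> C by rewrite invr_ge0 ltW.
have trE (X : Op R d) : trM (mulM maxmixed X) = #|Idx d|%:R^-1 * trM X.
  rewrite /trM mulr_sumr; apply: eq_bigr => x _.
  rewrite -(sum_delta_l (fun y => #|Idx d|%:R^-1 * X y x) x) /mulM /maxmixed /idM.
  by apply: eq_bigr => y _; rewrite -mulrb eq_sym; ring.
split; last first.
  rewrite /trM /maxmixed; under eq_bigr do rewrite /idM eqxx mulr1.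
  by rewrite sumr_const -(mulr_natr (#|Idx d|%:R^-1 : C)); apply: mulVf; rewrite gt_eqF.
split=> [x y | sigma sep_sigma].
  rewrite /maxmixed rmorphM /= ger0_conjc // /idM eq_sym.
  by case: (y == x); rewrite ?conjc1 ?conjc0.
by rewrite trE separable_trM // mulr1.
Qed.

End Witnesses.

Section InfMonotone.
Local Open Scope classical_set_scope.

Lemma max0_Ninf_le_subset (R : realType) (S1 S2 : set R) :
  S1 `<=` S2 -> S1 !=set0 -> has_lbound S2 ->
  Num.max 0 (- inf S1) <= Num.max 0 (- inf S2).
Proof.
move=> S12 S1_neq0 S2_lb.
have inf21 : inf S2 <= inf S1 by apply: lb_le_inf => // y /S12; exact: ge_inf.
by rewrite ge_max le_max lexx /= le_max lerN2 inf21 orbT.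
Qed.

End InfMonotone.

Theorem proposition2 (R : realType) (n : nat) (d : 'I_n -> nat)
    (L : Op R d -> Op R d) :
  LOCC_channel L -> trace_preserving L -> unital L ->
  forall rho : Op R d, density rho -> E_W (L rho) <= E_W rho.
Proof.
move=> /sep_lin_map_LOCC_channel sepL tpL unitalL rho [_ trrho1].
have card_gt0 : (0 < #|Idx d|)%N.
  rewrite lt0n; apply: contra_eqN trrho1 => /eqP/card0_eq Idx0.
  by rewrite /trM big_pred0 // eq_sym oner_eq0.
apply: max0_Ninf_le_subset.
- move=> _ [W nW <-]; exists (dualM L W); first exact: normalized_EW_dualM.
  by rewrite trM_mulM_dualM.
- exists (complex.Re (trM (mulM (@maxmixed R n d) (L rho)))), (@maxmixed R n d) => //.
  exact: normalized_EW_maxmixed.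
- by have [B lbB] := normalized_EW_trM_lbound rho; exists (- B) => _ [W nW <-]; exact: lbB.
Qed.
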